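(* There is an absolute constant $C>0$ such that for every $n\ge 2$ and all integers $b_1,\dots,b_n\ge 0$ with $b_1+\dots+b_n=n-1$, every equilibrium graph of $(b_1,\dots,b_n)$-BG in the SUM version has diameter at most $C\log n$.
   Context: Bounded budget network creation game $(b_1,\dots,b_n)$-BG: $n$ players with integer budgets $0\le b_i\le n-1$. A strategy of player $i$ is a set $S_i\subseteq\{1,\dots,n\}\setminus\{i\}$ with $|S_i|=b_i$; a profile is realized by the directed graph $G$ on $u_1,\dots,u_n$ with an arc $\overrightarrow{u_iu_j}$ iff $j\in S_i$. $U(G)$ is the undirected multigraph obtained by ignoring directions; $\operatorname{dist}(u,v)$ is the distance in $U(G)$, defined as $n^2$ between different components. SUM cost: $c_{SUM}(u)=\sum_v\operatorname{dist}(u,v)$. An equilibrium graph in the SUM version is a realization in which no vertex can decrease its SUM cost by changing its own strategy while the other strategies are fixed. The diameter is the maximum distance between two vertices. Logarithms are base 2. *)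

From mathcomp Require Import all_boot.
From Stdlib Require Import Reals.

Set Implicit Arguments.
Unset Strict Implicit.
Unset Printing Implicit Defensive.

(* A strategy profile for n players u_0,...,u_{n-1}: player i buys arcs to S i. *)
Definition profile (n : nat) := 'I_n -> {set 'I_n}.

Definition valid_profile (n : nat) (b : 'I_n -> nat) (S : profile n) : Prop :=
  forall i : 'I_n, i \notin S i /\ #|S i| = b i.

Definition uadj (n : nat) (S : profile n) : rel 'I_n :=
  fun x y => (y \in S x) || (x \in S y).

Definition walk_le (n : nat) (S : profile n) (k : nat) (u v : 'I_n) : bool :=
  [exists j : 'I_k.+1, [exists p : j.-tuple 'I_n,
     path (uadj S) u p && (last u p == v)]].

(* Distance in U(G): length of a shortest walk (any shortest walk has < n
   edges), and n^2 between different components. *)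
Definition dist (n : nat) (S : profile n) (u v : 'I_n) : nat :=
  if [exists k : 'I_n, walk_le S k u v]
  then \big[minn/n]_(k < n | walk_le S k u v) (k : nat)
  else n ^ 2.

Definition cost_sum (n : nat) (S : profile n) (u : 'I_n) : nat :=
  \sum_(v : 'I_n) dist S u v.

Definition deviate (n : nat) (S : profile n) (i : 'I_n) (T : {set 'I_n})
  : profile n := fun j => if j == i then T else S j.

Definition sum_equilibrium (n : nat) (b : 'I_n -> nat) (S : profile n) : Prop :=
  valid_profile b S /\
  forall (i : 'I_n) (T : {set 'I_n}), i \notin T -> #|T| = b i ->
    cost_sum S i <= cost_sum (deviate S i T) i.

Definition diameter (n : nat) (S : profile n) : nat :=
  \max_(u : 'I_n) \max_(v : 'I_n) dist S u v.

Definition log2 (x : R) : R := (ln x / ln 2)%R.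

From Pilot Require Import Defs.
From mathcomp Require Import all_boot zify.
From Stdlib Require Import Reals Lra.

Set Implicit Arguments.
Unset Strict Implicit.
Unset Printing Implicit Defensive.

(* With n - 1 arcs in total an equilibrium graph is a tree. Were it
   disconnected, some arc would lie outside a spanning forest of the components,
   and its owner could redirect it into another component, removing a distance
   n^2 from its cost. In a tree, let v_0 ... v_D be a shortest path and B_i the
   set of vertices closer to v_(i+1) than to v_i. The B_i decrease, and when
   v_i owns the arc to v_(i+1), the fact that swapping it for an arc to v_(i+2)
   does not pay forces |B_(i+1)| <= |B_i| / 2. Every inner edge of the path is
   owned from one of its ends, so reading the path in both directions gives
   2^(D-2) <= n^2, i.e. D <= 4 log n. *)

(* Importing Reals rebinds [^] on nat to [Nat.pow]; restore ssrnat's [expn]. *)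
Local Notation "m ^ n" := (expn m n) : nat_scope.

Lemma bigminn_eq_arg (I : finType) i0 (P : pred I) (F : I -> nat) m :
  P i0 -> (forall i, P i -> F i <= m) ->
  \big[minn/m]_(i | P i) F i = F [arg min_(i < i0 | P i) F i].
Proof.
move=> Pi0 leFm; case: arg_minnP => // i Pi minFi.
apply/eqP; rewrite eqn_leq; apply/andP; split.
  have : i \in index_enum I by rewrite mem_index_enum.
  elim: (index_enum I) => // j s IH; rewrite inE big_cons.
  case/orP => [/eqP <-|/IH le_i]; first by rewrite Pi geq_minl.
  by case: ifP => _ //; rewrite geq_min le_i orbT.
apply: (big_ind (fun x => F i <= x)) => [|x y hx hy|j Pj].
- exact: leFm.
- by rewrite leq_min hx hy.
- exact: minFi.
Qed.

Lemma sum_mem_card (T : finType) (A : {pred T}) : \sum_(x : T) (x \in A) = #|A|.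
Proof. by rewrite -sum1_card [RHS]big_mkcond; apply: eq_bigr => x _; case: (x \in A). Qed.

Lemma nested_halving (T : finType) (B : nat -> {set T}) (P : pred nat) m :
  (forall i, i < m -> B i.+1 \subset B i) ->
  (forall i, i < m -> P i -> 2 * #|B i.+1| <= #|B i|) ->
  B m != set0 -> 2 ^ (\sum_(0 <= i < m) P i) <= #|T|.
Proof.
move=> nested halves /set0Pn [x Bm_x].
suff halving k : k <= m -> 2 ^ (\sum_(0 <= i < k) P i) * #|B k| <= #|B 0|.
  apply: leq_trans (max_card (mem (B 0))).
  apply: leq_trans (halving m (leqnn m)).
  by rewrite leq_pmulr //; apply/card_gt0P; exists x.
elim: k => [|k IH] lt_km; first by rewrite big_geq // mul1n.
rewrite big_nat_recr //= expnD.
have le_Bk := subset_leq_card (nested k lt_km).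
apply: leq_trans (IH (ltnW lt_km)); rewrite -mulnA leq_mul2l; apply/orP; right.
by case: (P k) (halves k lt_km) => [->|_] //; rewrite mul1n.
Qed.

Lemma sum_cover_shift (f g : nat -> bool) m : (forall i, i < m -> f i.+1 || g i.+1) ->
  m <= \sum_(0 <= i < m.+1) f i + \sum_(0 <= i < m.+1) g i.+1.
Proof.
move=> cover; rewrite big_nat_recl // big_nat_recr //=.
suff : m <= \sum_(0 <= i < m) f i.+1 + \sum_(0 <= i < m) g i.+1 by lia.
rewrite -big_split big_mkord -[m in m <= _]card_ord -sum1_card /=.
by apply: leq_sum => i _; have := cover i (ltn_ord i); case: (f _); case: (g _).
Qed.

Section Distance.
Variables (n : nat) (S : profile n).
Local Notation e := (uadj S).
Local Notation d := (Defs.dist S).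

Lemma uadj_sym : symmetric e.
Proof. by move=> x y; rewrite /uadj orbC. Qed.

Lemma connect_uadj_sym : connect_sym e.
Proof. exact: sym_connect_sym uadj_sym. Qed.

Lemma walk_leP k u v :
  reflect (exists p, [/\ path e u p, last u p = v & size p <= k]) (walk_le S k u v).
Proof.
apply: (iffP idP) => [/existsP [j /existsP [p /andP [hp /eqP hl]]]|[p [hp hl hk]]].
  by exists p; split => //; rewrite size_tuple -ltnS.
have hk' : size p < k.+1 by rewrite ltnS.
apply/existsP; exists (Ordinal hk'); apply/existsP; exists (in_tuple p).
by rewrite /= hp hl eqxx.
Qed.

Lemma shorten_walk u p : path e u p ->
  exists q, [/\ path e u q, last u q = last u p, size q <= size p & size q < n].
Proof.
case/shortenP => q hq uq sub_qp; exists q; split => //.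
  by apply: uniq_leq_size sub_qp; case/andP: uq.
by have := max_card (mem (u :: q)); rewrite card_ord (card_uniqP uq).
Qed.

Lemma dist_minP u v : connect e u v ->
  walk_le S (d u v) u v /\ forall k : 'I_n, walk_le S k u v -> d u v <= k.
Proof.
case/connectP => p hp ->; have [q [hq hl _ hqn]] := shorten_walk hp.
have hk : walk_le S (Ordinal hqn) u (last u p) by apply/walk_leP; exists q.
rewrite /Defs.dist (_ : [exists k, _] = true); last by apply/existsP; exists (Ordinal hqn).
rewrite (@bigminn_eq_arg _ _ (fun k : 'I_n => walk_le S k u (last u p)) val n hk).
  by case: arg_minnP => // k hk kmin; split => // j /kmin.
by move=> k _; exact: ltnW (ltn_ord k).
Qed.

Lemma dist_path_le u p : path e u p -> d u (last u p) <= size p.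
Proof.
move=> hp; have [q [hq hl hqp hqn]] := shorten_walk hp.
have [_ dmin] := dist_minP (path_connect hp (mem_last u p)).
apply: leq_trans (dmin (Ordinal hqn) _) hqp.
by apply/walk_leP; exists q.
Qed.

Lemma shortest_walk u v : connect e u v ->
  exists p, [/\ path e u p, last u p = v & size p = d u v].
Proof.
case/dist_minP => /walk_leP [p [hp hl hpd]] _; exists p; split => //.
by apply/eqP; rewrite eqn_leq hpd -hl dist_path_le.
Qed.

Lemma dist_disconnected u v : ~~ connect e u v -> d u v = n * n.
Proof.
move=> nuv; rewrite /Defs.dist; case: existsP => [[k /walk_leP [p [hp hl _]]]|_].
  by case/negP: nuv; apply/connectP; exists p.
exact: Nat.pow_2_r.
Qed.

Lemma dist_lt_n u v : connect e u v -> d u v < n.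
Proof.
case/connectP => p hp ->; have [q [hq <- _ hqn]] := shorten_walk hp.
exact: leq_ltn_trans (dist_path_le hq) hqn.
Qed.

Lemma dist_le_sqr u v : d u v <= n * n.
Proof.
have [huv|huv] := boolP (connect e u v); last by rewrite dist_disconnected.
by have := dist_lt_n huv; nia.
Qed.

Lemma dist0 u : d u u = 0.
Proof. by apply/eqP; rewrite -leqn0 (dist_path_le (p := [::])). Qed.

Lemma dist_le1 u v : e u v -> d u v <= 1.
Proof. by move=> huv; apply: (dist_path_le (p := [:: v])); rewrite /= huv. Qed.

Lemma dist_triangle u v w : d u w <= d u v + d v w.
Proof.
have [huv|huv] := boolP (connect e u v); last first.
  by rewrite (dist_disconnected huv) (leq_trans (dist_le_sqr u w)) ?leq_addr.
have [hvw|hvw] := boolP (connect e v w); last first.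
  by rewrite (dist_disconnected hvw) (leq_trans (dist_le_sqr u w)) ?leq_addl.
have [p [hp hlp <-]] := shortest_walk huv; have [q [hq hlq <-]] := shortest_walk hvw.
have hpq : path e u (p ++ q) by rewrite cat_path hp hlp.
by rewrite -size_cat -hlq -hlp -last_cat dist_path_le.
Qed.

Lemma dist_path_rev_le u p : path e u p -> d (last u p) u <= size p.
Proof.
elim: p u => [|x p IH] u /=; first by rewrite dist0.
case/andP => hux hp; apply: leq_trans (dist_triangle _ x _) _.
by rewrite -addn1; apply: leq_add; [exact: IH | rewrite dist_le1 // uadj_sym].
Qed.

Lemma dist_sym u v : d u v = d v u.
Proof.
suff le_sym x y : d y x <= d x y by apply/eqP; rewrite eqn_leq !le_sym.
have [hxy|hxy] := boolP (connect e x y); last by rewrite (dist_disconnected hxy) dist_le_sqr.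
by have [p [hp <- <-]] := shortest_walk hxy; exact: dist_path_rev_le.
Qed.

Lemma dist_adj u v w : e u v -> d u w <= (d v w).+1.
Proof. by move=> huv; rewrite -add1n (leq_trans (dist_triangle u v w)) // leq_add2r dist_le1. Qed.

Lemma walk_split u p j : path e u p -> j <= size p ->
  [/\ path e u (take j p), last u (take j p) = nth u (u :: p) j,
      path e (nth u (u :: p) j) (drop j p) &
      last (nth u (u :: p) j) (drop j p) = last u p].
Proof.
elim: p u j => [|x p IH] u [|j] //= /andP [hux hp] hj.
have [h1 h2 h3 h4] := IH x j hp hj.
have -> : nth u (x :: p) j = nth x (x :: p) j by apply: set_nth_default.
by rewrite hux h1 h2 h3 h4.
Qed.

Lemma shortest_walk_dist u p j : path e u p -> size p = d u (last u p) -> j <= size p ->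
  d u (nth u (u :: p) j) = j /\ d (nth u (u :: p) j) (last u p) = size p - j.
Proof.
move=> hp hs hj; have [hp1 hl1 hp2 hl2] := walk_split hp hj.
have := dist_path_le hp1; rewrite hl1 size_takel // => le1.
have := dist_path_le hp2; rewrite hl2 size_drop => le2.
have := dist_triangle u (nth u (u :: p) j) (last u p); lia.
Qed.

(* A shortest walk from [u] to [y] only steps towards [y], from [u] itself or
   from vertices strictly closer to [y] than [u]; so it survives in any graph
   [r] that keeps such edges. *)
Lemma shortest_walk_in (r : rel 'I_n) u y : connect e u y ->
  (forall x z, e x z -> d z y < d x y -> d x y <= d u y ->
     (x != u -> d x y < d u y) -> r x z) ->
  exists p, [/\ path r u p, last u p = y & size p = d u y].
Proof.
move=> /shortest_walk [p [hp hl hs]] hr; exists p; split => //.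
suff walk_r x q : path e x q -> last x q = y -> size q = d x y -> d x y <= d u y ->
    (x != u -> d x y < d u y) -> path r x q.
  by apply: walk_r; rewrite ?hs ?eqxx.
elim: q x => [//|z q IH] x /= /andP [hxz hq] hlq hsq hxu hxu'.
have hzq : d z y = size q.
  by have := dist_path_le hq; have := dist_adj y hxz; rewrite hlq; lia.
have lt_zx : d z y < d x y by lia.
by rewrite hr //=; apply: IH => // [|_]; lia.
Qed.

End Distance.

Definition del_arc n (S : profile n) (o t : 'I_n) : profile n := deviate S o (S o :\ t).

Definition swap_arc n (S : profile n) (o t w : 'I_n) : profile n :=
  deviate S o (w |: (S o :\ t)).

Definition arcs n (S : profile n) : {set 'I_n * 'I_n} := [set xy | xy.2 \in S xy.1].

Definition unreachable n (S : profile n) (u : 'I_n) : {set 'I_n} :=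
  [set v | ~~ connect (uadj S) u v].

Section Deviation.
Variable n : nat.
Implicit Types (S : profile n) (o t u w x z : 'I_n) (T : {set 'I_n}).

Lemma uadj_deviate S o t T x z : S o :\ t \subset T -> uadj S x z ->
  (x, z) != (o, t) -> (z, x) != (o, t) -> uadj (deviate S o T) x z.
Proof.
move=> sub_T hxz; have keep x' z' : z' \in S x' -> (x', z') != (o, t) -> z' \in deviate S o T x'.
  rewrite /deviate xpair_eqE; case: eqP => [-> hz /= hzt|//].
  by apply: (subsetP sub_T); rewrite !inE hz hzt.
move=> ne1 ne2; case/orP: hxz => h; rewrite /uadj.
  by rewrite (keep x z h ne1).
by rewrite (keep z x h ne2) orbT.
Qed.

Lemma uadj_del_arc S o t x z : uadj S x z ->
  (x, z) != (o, t) -> (z, x) != (o, t) -> uadj (del_arc S o t) x z.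
Proof. exact: uadj_deviate (subxx _). Qed.

Lemma uadj_swap_arc S o t w x z : uadj S x z ->
  (x, z) != (o, t) -> (z, x) != (o, t) -> uadj (swap_arc S o t w) x z.
Proof. exact: uadj_deviate (subsetUr _ _). Qed.

Lemma uadj_swap_arc_new S o t w : uadj (swap_arc S o t w) o w.
Proof. by rewrite /uadj /swap_arc /deviate eqxx setU11. Qed.

Lemma uadj_del_swap S o t w : subrel (uadj (del_arc S o t)) (uadj (swap_arc S o t w)).
Proof.
have sub x : del_arc S o t x \subset swap_arc S o t w x.
  by rewrite /del_arc /swap_arc /deviate; case: eqP => _; rewrite ?subsetUr.
by move=> x z /orP [] h; rewrite /uadj (subsetP (sub _) _ h) ?orbT.
Qed.

Lemma arcs_del_arc S o t : arcs (del_arc S o t) = arcs S :\ (o, t).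
Proof.
apply/setP => -[x z]; rewrite !inE /del_arc /deviate /= xpair_eqE.
by case: eqP => [->|_]; rewrite ?inE.
Qed.

Lemma card_arcs_del_arc S o t : t \in S o -> #|arcs (del_arc S o t)| = #|arcs S|.-1.
Proof. by move=> ot; rewrite arcs_del_arc (cardsD1 (o, t) (arcs S)) inE /= ot. Qed.

Lemma card_arcs S : #|arcs S| = \sum_i #|S i|.
Proof.
rewrite -sum_mem_card; under [RHS]eq_bigr do rewrite -sum_mem_card.
by rewrite pair_big; apply: eq_bigr => -[x z] _; rewrite inE.
Qed.

Lemma swap_arc_no_gain b S o t w : sum_equilibrium b S ->
  t \in S o -> w != o -> w \notin S o -> cost_sum S o <= cost_sum (swap_arc S o t w) o.
Proof.
case=> valid eq ht hwo hwS; have [hoS card_So] := valid o; apply: eq.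
  by rewrite !inE negb_or eq_sym hwo negb_and hoS orbT.
by rewrite cardsU1 !inE (negbTE hwS) andbF -card_So (cardsD1 t (S o)) ht.
Qed.

(* A single unreachable vertex outweighs all finite distances together. *)
Lemma cost_sum_lt S S' u : #|unreachable S' u| < #|unreachable S u| ->
  cost_sum S' u < cost_sum S u.
Proof.
have cost_split S0 : cost_sum S0 u = #|unreachable S0 u| * (n * n) +
    \sum_(v | v \notin unreachable S0 u) Defs.dist S0 u v.
  rewrite /cost_sum (bigID (mem (unreachable S0 u))) /= -sum_nat_const.
  by congr (_ + _); apply: eq_bigr => v; rewrite inE => /dist_disconnected.
have reach_le S0 : \sum_(v | v \notin unreachable S0 u) Defs.dist S0 u v <= n * n.-1.
  apply: (@leq_trans (\sum_(v | v \notin unreachable S0 u) n.-1)).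
    by apply: leq_sum => v; rewrite inE negbK => /dist_lt_n; lia.
  by rewrite sum_nat_const leq_mul // -[n in _ <= n]card_ord max_card.
rewrite !cost_split => lt_card.
have := reach_le S'; have := leq_mul lt_card (leqnn (n * n)).
have := ltn_ord u; nia.
Qed.

End Deviation.

Section SpanningForest.
Variables (n : nat) (S : profile n).
Implicit Types (o t u v x y z : 'I_n).

Lemma spanning_forest (rho : 'I_n -> 'I_n) :
  (forall x, connect (uadj S) x (rho x)) ->
  (forall x y, connect (uadj S) x y -> rho x = rho y) ->
  exists F : {set 'I_n * 'I_n}, [/\ F \subset arcs S, #|F| = #|[set x | rho x != x]| &
    forall o t, (o, t) \in arcs S :\: F -> forall x, connect (uadj (del_arc S o t)) x (rho x)].
Proof.
move=> root_conn root_const; set N := [set x | rho x != x].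
pose towards_root x z := uadj S x z && (Defs.dist S z (rho x) < Defs.dist S x (rho x)).
have [par par_step] : exists par, forall x, x \in N -> towards_root x (par x).
  exists (fun x => odflt x [pick z | towards_root x z]) => x; rewrite inE => hx.
  case: pickP => [//|none] /=.
  have [[|z p] [/= hp hl hs]] := shortest_walk (root_conn x); first by rewrite -hl eqxx in hx.
  case/andP: hp => hxz hp; have := none z; rewrite /towards_root hxz -hs.
  by have := dist_path_le hp; rewrite hl => /leq_ltn_trans ->.
have root_par x : x \in N -> rho (par x) = rho x.
  by move/par_step => /andP [hxz _]; apply/esym/root_const/connect1.
(* [x] is charged to the arc joining it to [par x], a neighbour closer to its root. *)
pose arc x := if par x \in S x then (x, par x) else (par x, x).
have arc_arcs x : x \in N -> arc x \in arcs S.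
  move/par_step => /andP [hxz _]; rewrite /arc inE.
  by case: ifP => //= hx; move: hxz; rewrite /uadj hx.
have arc_uadj S0 x : arc x \in arcs S0 -> uadj S0 x (par x).
  by rewrite /arc /uadj; case: ifP => _; rewrite inE => /= ->; rewrite ?orbT.
exists (arc @: N); split.
- by apply/subsetP => _ /imsetP [x hx ->]; exact: arc_arcs.
- apply: card_in_imset => x x' hx hx'.
  have /andP [_ lt_x] := par_step x hx; have /andP [_ lt_x'] := par_step x' hx'.
  rewrite /arc; case: ifP => _; case: ifP => _ [e1 e2] //.
  + have rho_eq : rho x' = rho x by rewrite -e2 root_par.
    rewrite e2 in lt_x; rewrite -e1 rho_eq in lt_x'.
    by have := ltn_trans lt_x lt_x'; rewrite ltnn.
  + have rho_eq : rho x' = rho x by rewrite -e1 root_par.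
    rewrite e1 in lt_x; rewrite -e2 rho_eq in lt_x'.
    by have := ltn_trans lt_x lt_x'; rewrite ltnn.
- move=> o t; rewrite inE => /andP [notF ot_arc].
  suff conn_root k x : Defs.dist S x (rho x) < k -> connect (uadj (del_arc S o t)) x (rho x).
    by move=> x; exact: conn_root.
  elim: k x => [//|k IH] x lt_k.
  have [hx|] := boolP (x \in N); last by rewrite inE negbK => /eqP ->.
  have /andP [hxp lt_par] := par_step x hx.
  have arc_ne : arc x != (o, t) by apply: contraNneq notF => <-; exact: imset_f.
  have del_xp : uadj (del_arc S o t) x (par x).
    by apply: arc_uadj; rewrite arcs_del_arc in_setD1 arc_ne arc_arcs.
  apply: connect_trans (connect1 del_xp) _; rewrite -(root_par x hx); apply: IH.
  by rewrite (root_par x hx); exact: leq_trans lt_par lt_k.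
Qed.

End SpanningForest.

Section FewArcs.
Variables (n : nat) (S : profile n).
Hypothesis card_arcs_S : #|arcs S| = n - 1.
Implicit Types (o t u v x y : 'I_n).

Lemma spare_arc u v : ~~ connect (uadj S) u v -> exists o t, t \in S o /\
  forall x y, connect (uadj S) x y -> connect (uadj (del_arc S o t)) x y.
Proof.
move=> nuv; pose rho := root (uadj S).
have root_const x y : connect (uadj S) x y -> rho x = rho y := rootP (connect_uadj_sym S).
have [F [_ card_F keep]] := spanning_forest (rho := rho) (connect_root (uadj S)) root_const.
(* The spanning forest has at most n - 2 arcs, as [u] and [v] lie in distinct trees. *)
have roots_uv : #|[set x | rho x != x]| + 2 <= n.
  have sub : [set x | rho x != x] \subset ~: [set rho u; rho v].
    apply/subsetP => x; rewrite !inE; apply: contra => /orP [] /eqP ->;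
      by rewrite /rho (root_root (connect_uadj_sym S)).
  have ne : rho u != rho v by apply: contra nuv => /eqP /(rootP (connect_uadj_sym S)).
  have := cardsC [set rho u; rho v]; have := subset_leq_card sub.
  by rewrite cards2 ne card_ord; lia.
have /subsetPn [[o t] ot_arc notF] : ~~ (arcs S \subset F).
  by apply/negP => /subset_leq_card; move: roots_uv; rewrite -card_F card_arcs_S; lia.
have ot_F : (o, t) \in arcs S :\: F by rewrite inE notF.
exists o, t; split; first by rewrite inE in ot_arc.
move=> x y /root_const rho_xy; apply: connect_trans (keep o t ot_F x) _.
by rewrite rho_xy connect_uadj_sym; exact: keep.
Qed.

Lemma arc_bridge o t : (forall x y, connect (uadj S) x y) -> t \in S o ->
  ~~ connect (uadj (del_arc S o t)) o t.
Proof.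
(* Otherwise the remaining n - 2 arcs would still connect all n vertices. *)
move=> conn ot; apply/negP => ot_conn; set S0 := del_arc S o t.
have conn0 x y : connect (uadj S0) x y.
  apply: (connect_sub _ (conn x y)) => {}x z hxz.
  have [[-> ->]|ne1] := eqVneq (x, z) (o, t); first by [].
  have [[-> ->]|ne2] := eqVneq (z, x) (o, t); first by rewrite connect_uadj_sym.
  by apply: connect1; exact: uadj_del_arc.
have [F [sub_F card_F _]] :=
  spanning_forest (rho := fun => o) (conn0^~ o) (fun _ _ _ => erefl).
have := subset_leq_card sub_F; rewrite card_F card_arcs_del_arc // card_arcs_S.
have -> : [set x | o != x] = [set~ o] by apply/setP => x; rewrite !inE eq_sym.
have : 0 < #|arcs S| by apply/card_gt0P; exists (o, t); rewrite inE.
by rewrite cardsC1 card_ord card_arcs_S; lia.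
Qed.

End FewArcs.

Lemma equilibrium_connected n (b : 'I_n -> nat) (S : profile n) :
  sum_equilibrium b S -> #|arcs S| = n - 1 -> forall x y, connect (uadj S) x y.
Proof.
move=> S_eq card_arcs_S u v; apply: contraT => nuv.
have [o [t [ot keep]]] := spare_arc card_arcs_S nuv.
have [w nw] : exists w, ~~ connect (uadj S) o w.
  have [ou|] := boolP (connect (uadj S) o u); last by exists u.
  by exists v; apply: contra nuv; apply: connect_trans; rewrite connect_uadj_sym.
have hwo : w != o by apply: contraNneq nw => ->.
have hwS : w \notin S o by apply: contra nw => hw; apply: connect1; rewrite /uadj hw.
suff : cost_sum (swap_arc S o t w) o < cost_sum S o.
  by rewrite ltnNge (swap_arc_no_gain S_eq ot hwo hwS).
apply: cost_sum_lt; apply: (@leq_ltn_trans #|unreachable S o :\ w|).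
  apply/subset_leq_card/subsetP => y; rewrite !inE; apply: contraR.
  rewrite negb_and !negbK => /orP [/eqP ->|oy]; first exact/connect1/uadj_swap_arc_new.
  by apply: (connect_sub _ (keep o y oy)) => x z /(uadj_del_swap w) /connect1.
by rewrite [X in _ < X](cardsD1 w) inE nw.
Qed.

Definition closer n (S : profile n) (x z : 'I_n) : {set 'I_n} :=
  [set y | Defs.dist S z y < Defs.dist S x y].

Section Swap.
Variables (n : nat) (S : profile n) (p q r : 'I_n).
Hypotheses (S_conn : forall x y, connect (uadj S) x y)
  (pq : q \in S p) (qr : uadj S q r) (rp : r != p).
Local Notation d := (Defs.dist S).
Local Notation S' := (swap_arc S p q r).

(* When [p] trades its arc to [q] for one to [r], vertices closer to [q] than to
   [p] and closer to [r] than to [q] get nearer to [p], other vertices closer to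
   [q] than to [p] get at most one farther, and the rest keep their distance. *)
Lemma swap_arc_dist y :
  Defs.dist S' p y + (y \in closer S p q :&: closer S q r) <=
  d p y + (y \in closer S p q :\: closer S q r).
Proof.
have avoid s : (forall x z, d z y < d x y -> d x y <= d s y ->
      (x, z) != (p, q) /\ (z, x) != (p, q)) ->
    Defs.dist S' s y <= d s y.
  move=> hs; suff [w [hw <- <-]] : exists w,
      [/\ path (uadj S') s w, last s w = y & size w = d s y] by exact: dist_path_le.
  apply: shortest_walk_in (S_conn s y) _ => x z xz h1 h2 _.
  by have [ne1 ne2] := hs x z h1 h2; exact: uadj_swap_arc.
rewrite !inE; have [qy_py|py_qy] /= := ltnP (d q y) (d p y); last first.
  rewrite andbF !addn0; apply: avoid => x z h1 h2.
  by split; apply/eqP => -[ex ez]; subst x z; lia.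
have qp : q != p by apply: contraTneq qy_py => ->; rewrite ltnn.
have [ry_qy|qy_ry] := ltnP (d r y) (d q y).
  have r_y : Defs.dist S' r y <= d r y.
    apply: avoid => x z h1 h2.
    by split; apply/eqP => -[ex ez]; subst x z; lia.
  have := dist_adj y (uadj_swap_arc_new S p q r); lia.
have q_y : Defs.dist S' q y <= d q y.
  apply: avoid => x z h1 h2.
  by split; apply/eqP => -[ex ez]; subst x z; lia.
have rq' : uadj S' r q.
  by apply: uadj_swap_arc; rewrite 1?uadj_sym // xpair_eqE negb_and ?rp ?qp ?orbT.
have pq' : uadj S p q by rewrite /uadj pq.
have := dist_adj y (uadj_swap_arc_new S p q r); have := dist_adj y rq'.
have := dist_adj y pq'; lia.
Qed.

Lemma swap_closer_card b : sum_equilibrium b S -> r \notin S p ->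
  #|closer S p q :&: closer S q r| <= #|closer S p q :\: closer S q r|.
Proof.
move=> S_eq rS; have := swap_arc_no_gain S_eq pq rp rS; rewrite /cost_sum => le_cost.
have := leq_sum (index_enum 'I_n) (fun y (_ : true) => swap_arc_dist y).
rewrite !big_split /= !sum_mem_card => le_sum.
by rewrite -(leq_add2l (\sum_y d p y)) (leq_trans _ le_sum) // leq_add2r.
Qed.

End Swap.

Section Tree.
Variables (n : nat) (b : 'I_n -> nat) (S : profile n).
Hypotheses (S_eq : sum_equilibrium b S) (sum_b : \sum_(i < n) b i = n - 1).
Local Notation d := (Defs.dist S).

Lemma tree_card_arcs : #|arcs S| = n - 1.
Proof.
have [valid _] := S_eq; rewrite card_arcs -sum_b.
by apply: eq_bigr => i _; have [_ ->] := valid i.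
Qed.

Lemma tree_connected x y : connect (uadj S) x y.
Proof. exact: equilibrium_connected S_eq tree_card_arcs x y. Qed.

Lemma tree_edge_cut q r : uadj S q r -> exists2 S0 : profile n,
  (forall x z, uadj S x z -> (x, z) != (q, r) -> (z, x) != (q, r) -> uadj S0 x z) &
  ~~ connect (uadj S0) q r.
Proof.
have bridge := arc_bridge tree_card_arcs tree_connected.
case/orP => [qr|rq].
  by exists (del_arc S q r); [exact: uadj_del_arc | exact: bridge].
exists (del_arc S r q); last by rewrite connect_uadj_sym bridge.
by move=> x z xz ne1 ne2; apply: uadj_del_arc; rewrite // xpair_eqE andbC -xpair_eqE.
Qed.

Lemma closer_nested p q r : uadj S p q -> uadj S q r -> d p r = 2 ->
  closer S q r \subset closer S p q.
Proof.
(* Otherwise shortest paths from [p] and [r] to [y] avoid the edge [qr], which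
   therefore is not a bridge. *)
move=> pq qr pr; apply/subsetP => y; rewrite !inE => ry_qy; rewrite ltnNge.
apply/negP => qy_py; have [S0 keep cut] := tree_edge_cut qr.
have reach s : (forall x z, d z y < d x y -> d x y <= d s y ->
    (x != s -> d x y < d s y) -> (x, z) != (q, r) /\ (z, x) != (q, r)) ->
    connect (uadj S0) s y.
  move=> hs; suff [w [hw hl _]] : exists w,
      [/\ path (uadj S0) s w, last s w = y & size w = d s y] by apply/connectP; exists w.
  apply: shortest_walk_in (tree_connected s y) _ => x z xz h1 h2 h3.
  by have [ne1 ne2] := hs x z h1 h2 h3; exact: keep.
have qp : q != p by apply/eqP => qp; move: pr; rewrite -qp; have := dist_le1 qr; lia.
have rp : r != p by apply/eqP => rp; move: pr; rewrite rp dist0.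
have r_y : connect (uadj S0) r y.
  apply: reach => x z h1 h2 _.
  by split; apply/eqP => -[ex ez]; subst x z; lia.
have p_y : connect (uadj S0) p y.
  apply: reach => x z h1 h2 h3.
  split; apply/eqP => -[ex ez]; subst x z; last lia.
  by have := h3 qp; lia.
have p_q : uadj S0 p q.
  by apply: keep; rewrite // xpair_eqE ?(eq_sym p q) ?(eq_sym p r) ?(negbTE qp) ?(negbTE rp) ?andbF.
case/negP: cut; apply: connect_trans (connect1 _) (connect_trans p_y _).
  by rewrite uadj_sym.
by rewrite connect_uadj_sym.
Qed.

Lemma geodesic_halving (v : nat -> 'I_n) D :
  (forall i, i < D -> uadj S (v i) (v i.+1)) ->
  (forall i, i <= D -> d (v i) (v D) = D - i) ->
  2 ^ (\sum_(0 <= i < D.-1) (v i.+1 \in S (v i))) <= n.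
Proof.
case: D => [|D] edge dist_end /=.
  by rewrite big_geq // expn0; have := ltn_ord (v 0); lia.
have dist2 i : i < D -> d (v i) (v i.+2) = 2.
  move=> lt_iD; apply/eqP; rewrite eqn_leq; apply/andP; split.
    apply: (dist_path_le (p := [:: v i.+1; v i.+2])).
    by rewrite /= !edge ?andbT //; lia.
  have := dist_triangle S (v i) (v i.+2) (v D.+1); rewrite !dist_end; lia.
have nest i : i < D -> closer S (v i.+1) (v i.+2) \subset closer S (v i) (v i.+1).
  by move=> lt_iD; apply: closer_nested (dist2 i lt_iD); apply: edge; lia.
apply: leq_trans (eq_leq (card_ord n)).
apply: (nested_halving (B := fun i => closer S (v i) (v i.+1))) => // [i lt_iD own|].
  have r_ne_p : v i.+2 != v i.
    by apply/eqP => eq_vi; move: (dist2 i lt_iD); rewrite eq_vi dist0.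
  have r_notin : v i.+2 \notin S (v i).
    apply/negP => own2; have adj : uadj S (v i) (v i.+2) by rewrite /uadj own2.
    by have := dist_le1 adj; rewrite dist2.
  have e1 : uadj S (v i.+1) (v i.+2) by apply: edge.
  have := swap_closer_card tree_connected own e1 r_ne_p S_eq r_notin.
  by rewrite (setIidPr (nest i lt_iD)) cardsD (setIidPr (nest i lt_iD)); lia.
by apply/set0Pn; exists (v D.+1); rewrite inE dist0 dist_end; lia.
Qed.

Lemma dist_pow2_bound u y : 2 ^ (d u y - 2) <= n * n.
Proof.
have [p [hp hl hs]] := shortest_walk (tree_connected u y).
set D := d u y in hs *; pose v j := nth u (u :: p) j.
have edge j : j < D -> uadj S (v j) (v j.+1) by move=> lt_jD; apply: (pathP u hp); rewrite hs.
have dist_v j : j <= D -> d (v j) u = j /\ d (v j) y = D - j.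
  move=> le_jD; rewrite -hs in le_jD; rewrite dist_sym -hl -hs.
  by apply: shortest_walk_dist; rewrite // hl.
have vD : v D = y by rewrite /v -hs -last_nth.
(* [w] is the path read backwards: its forward arcs are the backward arcs of [v]. *)
pose w j := v (D - j).
have [short|long] := ltnP D 2.
  by rewrite (_ : D - 2 = 0) ?expn0 ?muln_gt0 ?andbb; have := ltn_ord u; lia.
have bwd_eq : \sum_(0 <= i < D.-1) (w i.+1 \in S (w i)) =
              \sum_(0 <= i < D.-1) (v i.+1 \in S (v i.+2)).
  rewrite big_nat_rev; apply: eq_big_nat => i /andP [_ lt_i].
  by rewrite /w add0n; congr (v _ \in S (v _)); lia.
have count : D - 2 <= \sum_(0 <= i < D.-1) (v i.+1 \in S (v i)) +
                     \sum_(0 <= i < D.-1) (w i.+1 \in S (w i)).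
  rewrite bwd_eq (_ : D.-1 = (D - 2).+1); last lia.
  apply: (@sum_cover_shift (fun i => v i.+1 \in S (v i)) (fun i => v i \in S (v i.+1))).
  by move=> i lt_i; apply: edge; lia.
apply: leq_trans (leq_pexp2l _ count) _ => //; rewrite expnD.
apply: leq_mul; apply: geodesic_halving => [j lt_jD|j le_jD].
- exact: edge.
- by rewrite vD; have [] := dist_v j le_jD.
- by rewrite uadj_sym /w (_ : D - j = (D - j.+1).+1) ?edge; lia.
- by rewrite /w subnn; have [-> _] := dist_v _ (leq_subr j D); lia.
Qed.

End Tree.

Lemma INR_expn m k : INR (m ^ k) = pow (INR m) k.
Proof. by elim: k => [|k IH] //=; rewrite expnS mult_INR IH. Qed.

Lemma ln_le (x y : R) : (0 < x)%R -> (x <= y)%R -> (ln x <= ln y)%R.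
Proof.
move=> x_gt0 /Rle_lt_or_eq_dec [x_lt_y|<-]; last exact: Rle_refl.
exact/Rlt_le/ln_increasing.
Qed.

Lemma log_bound (n D : nat) : 2 <= n -> 2 ^ (D - 2) <= n * n ->
  (INR D <= 4 * log2 (INR n))%R.
Proof.
move=> n_ge2 pow_le.
have INR2 : INR 2 = 2%R by rewrite /=; lra.
have ln2_gt0 : (0 < ln 2)%R by rewrite -ln_1; apply: ln_increasing; lra.
have n_ge2R : (2 <= INR n)%R by rewrite -INR2; apply/le_INR/leP.
have ln_n : (ln 2 <= ln (INR n))%R by apply: ln_le; lra.
have ln_pow_le : (INR (D - 2) * ln 2 <= 2 * ln (INR n))%R.
  rewrite -ln_pow; last lra.
  rewrite (_ : 2 * ln (INR n) = ln (INR n * INR n))%R; last by rewrite ln_mult; lra.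
  apply: ln_le; first by apply: pow_lt; lra.
  by rewrite -INR2 -INR_expn -mult_INR; apply/le_INR/leP.
have D_le : (INR D <= INR (D - 2) + 2)%R.
  by rewrite -INR2 -plus_INR; apply/le_INR/leP; lia.
rewrite /log2; apply: (Rmult_le_reg_r (ln 2)) => //.
rewrite Rmult_assoc /Rdiv Rmult_assoc Rinv_l; nra.
Qed.

Theorem mainTheorem4 :
  exists C : R, (0 < C)%R /\
    forall (n : nat) (b : 'I_n -> nat) (S : profile n),
      2 <= n ->
      (forall i, b i <= n - 1) ->
      \sum_(i < n) b i = n - 1 ->
      sum_equilibrium b S ->
      (INR (diameter S) <= C * log2 (INR n))%R.
Proof.
exists 4%R; split; first lra.
move=> n b S n_ge2 _ sum_b S_eq.
have n_gt0 : 0 < #|'I_n| by rewrite card_ord; lia.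
rewrite /diameter; have [u ->] := eq_bigmax (fun u => \max_v Defs.dist S u v) n_gt0.
have [v ->] := eq_bigmax (fun v => Defs.dist S u v) n_gt0.
exact: log_bound n_ge2 (dist_pow2_bound S_eq sum_b u v).
Qed.
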